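(* Consider a proof-of-work blockchain in which every block is received by every miner less than $\Delta_B$ time units after it is published, and in which an attacker can instantly learn of any message published on the network and can deliver any message to any miner instantaneously. Suppose honest miners use a tie-breaking rule with acceptance window $w$, and the attacker performs a Match against post-generated block. If $w \ge \Delta_B$, then every honest miner receives the block generated by the honest miner before that honest miner's own acceptance window ends.
   Context: Miners extend a chain of blocks chosen by a predefined fork choice rule (e.g. longest chain). A chain tie occurs when this rule does not determine a unique chain. Each miner records the arrival time of every block, and the arrival time of a chain is the arrival time of its head (most recent block). In a chain tie, a miner applying an acceptance window $w$ considers only those tied chains whose arrival time is at most $w$ after the arrival time of the earliest-arriving tied chain. The acceptance window of a miner thus starts when the first chain of the tie arrives at that miner and ends $w$ later. A Match against post-generated block is the following attack. The attacker successfully generates a block and withholds it. When an honest miner generates and publishes a competing block, the attacker immediately publishes its withheld block, creating a chain tie. *)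

From Stdlib Require Import Reals.
Open Scope R_scope.

Record Block (Miner : Type) := mkBlock {
  pub_time : R;
  arrival : Miner -> R
}.
Arguments pub_time {Miner}.
Arguments arrival {Miner}.

Definition delivered_within {Miner : Type} (DeltaB : R) (b : Block Miner) : Prop :=
  forall m, pub_time b <= arrival b m /\ arrival b m < pub_time b + DeltaB.

(* Arrival time of a chain at a miner = arrival time of its head. *)
Definition window_start {Miner : Type} (b1 b2 : Block Miner) (m : Miner) : R :=
  Rmin (arrival b1 m) (arrival b2 m).

Definition window_end {Miner : Type} (w : R) (b1 b2 : Block Miner) (m : Miner) : R :=
  window_start b1 b2 m + w.

(* Match against a post-generated block: the honest block [bh] is published;
   the attacker, learning of it instantly, immediately publishes its withheld
   block [ba] (at the same instant) and may deliver it to any miner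
   instantaneously; every block is still delivered within [DeltaB]. *)
Definition match_post_generated {Miner : Type} (DeltaB : R) (bh ba : Block Miner) : Prop :=
  pub_time ba = pub_time bh /\ delivered_within DeltaB ba.

(* Both tied blocks are published at the same instant, so every acceptance
   window opens no earlier than that instant, whereas the honest block
   arrives less than [DeltaB <= w] after it. *)
From Stdlib Require Import Reals Lra.
Open Scope R_scope.

Lemma delivered_pub_le_arrival {Miner : Type} {DeltaB : R} {b : Block Miner} m :
  delivered_within DeltaB b -> pub_time b <= arrival b m.
Proof. intros Hb; apply (Hb m). Qed.

Lemma delivered_arrival_lt {Miner : Type} {DeltaB : R} {b : Block Miner} m :
  delivered_within DeltaB b -> arrival b m < pub_time b + DeltaB.
Proof. intros Hb; apply (Hb m). Qed.

Lemma match_pub_le_window_start {Miner : Type} {DeltaB : R} {bh ba : Block Miner} m :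
  delivered_within DeltaB bh -> match_post_generated DeltaB bh ba ->
  pub_time bh <= window_start bh ba m.
Proof.
  intros Hbh [Hpub Hba].
  apply Rmin_glb.
  - exact (delivered_pub_le_arrival m Hbh).
  - rewrite <- Hpub; exact (delivered_pub_le_arrival m Hba).
Qed.

Theorem theorem1 (Miner : Type) (honest : Miner -> Prop) (DeltaB w : R)
  (bh ba : Block Miner) :
  delivered_within DeltaB bh ->
  match_post_generated DeltaB bh ba ->
  DeltaB <= w ->
  forall m, honest m -> arrival bh m <= window_end w bh ba m.
Proof.
  intros Hbh Hmatch Hw m _.
  unfold window_end.
  pose proof (delivered_arrival_lt m Hbh) as Harrival.
  pose proof (match_pub_le_window_start m Hbh Hmatch) as Hstart.
  lra.
Qed.
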